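(* Let $X$ be a $T_1$ space and $\mathcal{P}$ an ideal of closed subsets of $X$ containing every singleton subset of $X$. Then $C(X)_\mathcal{P}$ is a Noetherian ring if and only if $X$ is finite.
   Context: An ideal of closed subsets of $X$ is a family $\mathcal{P}$ of closed subsets closed under finite unions and under passing to closed subsets. $D_f$ is the set of discontinuity points of $f\in\mathbb{R}^X$; $C(X)_\mathcal{P}=\{f\in\mathbb{R}^X\colon\overline{D_f}\in\mathcal{P}\}$ with pointwise operations. *)

From HB Require Import structures.
From mathcomp Require Import all_boot all_order all_algebra.
From mathcomp Require Import all_classical all_reals all_analysis.
Set Implicit Arguments. Unset Strict Implicit. Unset Printing Implicit Defensive.
Import Order.TTheory GRing.Theory Num.Theory.
Import numFieldTopology.Exports numFieldNormedType.Exports.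
Local Open Scope classical_set_scope.
Local Open Scope ring_scope.

Definition closed_ideal (X : topologicalType) (P : set (set X)) : Prop :=
  [/\ (forall A, P A -> closed A),
      P set0,
      (forall A B, P A -> P B -> P (A `|` B)) &
      (forall A B, P A -> closed B -> B `<=` A -> P B)].

Definition discont (X : topologicalType) (R : realType) (f : X -> R) : set X :=
  [set x : X | ~ {for x, continuous f}].

(* C(X)_P as a subset of R^X (with pointwise operations) *)
Definition CP (X : topologicalType) (R : realType) (P : set (set X)) : set (X -> R) :=
  [set f | P (closure (discont f))].

Definition ring_ideal (X : Type) (R : realType) (S I : set (X -> R)) : Prop :=
  [/\ I `<=` S,
      I (fun _ => 0),
      (forall a b, I a -> I b -> I (fun x => a x - b x)) &
      (forall r a, S r -> I a -> I (fun x => r x * a x))].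

Definition noetherian_sub (X : Type) (R : realType) (S : set (X -> R)) : Prop :=
  forall I : nat -> set (X -> R),
    (forall n, ring_ideal S (I n)) ->
    (forall n, I n `<=` I n.+1) ->
    exists N : nat, forall n : nat, (N <= n)%N -> I n = I N.

From mathcomp Require Import all_boot all_order all_algebra.
From mathcomp Require Import all_classical all_reals all_analysis.
Set Implicit Arguments.
Unset Strict Implicit.
Unset Printing Implicit Defensive.
Import GRing.Theory Num.Theory.
Local Open Scope classical_set_scope.
Local Open Scope ring_scope.

(* If X is finite, the closure of the discontinuity set of any f : X -> R lies
   in the finite, hence closed, set where f is nonzero, and finite sets belong
   to P; so C(X)_P is all of R^X.  An ideal I of R^X is then determined by the
   set Z(I) of points where some member of I is nonzero: a sum of squares of
   members of I is nonzero exactly on Z(I) and divides every member of I.  An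
   ascending chain of ideals thus becomes an ascending chain of subsets of X,
   which stabilizes.  If X is infinite, choose distinct points x_0, x_1, ...:
   the functions supported in {x_k | k < n} form a strictly ascending chain of
   ideals of C(X)_P. *)

Definition supported_in {T : Type} {R : realType} (A : set T) : set (T -> R) :=
  [set f | [set x | f x != 0] `<=` A].

Definition ideal_support {T : Type} {R : realType} (I : set (T -> R)) : set T :=
  [set x | exists2 f, I f & f x != 0].

Lemma subset_chain_homo (T : Type) (Z : nat -> set T) :
  (forall n, Z n `<=` Z n.+1) -> {homo Z : m n / (m <= n)%N >-> m `<=` n}.
Proof.
move=> Zinc m n; rewrite -subsetEset; apply: (nondecreasing_seqP Z).1 => k.
by rewrite subsetEset.
Qed.

Lemma finite_chain_bound (T : eqType) (Z : nat -> set T) :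
  (forall n, Z n `<=` Z n.+1) -> finite_set (\bigcup_n Z n) ->
  exists N, forall n, Z n `<=` Z N.
Proof.
move=> /subset_chain_homo Zmono /finite_seqP[s Zs].
suff [N sN] : exists N, [set` s] `<=` Z N.
  by exists N => n x Znx; apply: sN; rewrite -Zs; exists n.
have : [set` s] `<=` \bigcup_n Z n by rewrite Zs.
elim: s {Zs} => [|y s IH] sZ; first by exists 0%N.
have [N sN] : exists N, [set` s] `<=` Z N.
  by apply: IH => x xs; apply: sZ; rewrite /= in_cons xs orbT.
have [n _ Zny] := sZ y (mem_head y s).
exists (maxn N n) => x /=; rewrite in_cons => /orP[/eqP -> | xs].
  exact: Zmono (leq_maxr N n) _ Zny.
exact: Zmono (leq_maxl N n) _ (sN x xs).
Qed.

Lemma infinite_injective (T : Type) :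
  infinite_set [set: T] -> exists e : nat -> T, injective e.
Proof.
elim/Ppointed: T => T; first by rewrite emptyE => -[]; exact: finite_set0.
move=> /infiniteP/pcard_injP[e einj]; exists e => m n.
by apply: einj; exact: in_setT.
Qed.

Section RingIdeals.
Variables (T : Type) (R : realType) (S : set (T -> R)).

Lemma ring_idealD (I : set (T -> R)) a b :
  ring_ideal S I -> I a -> I b -> I (fun x => a x + b x).
Proof.
case=> _ I0 IB _ Ia Ib; have := IB a _ Ia (IB _ _ I0 Ib).
by congr I; apply/funext => x; rewrite sub0r opprK.
Qed.

Lemma ring_ideal_supported (A : set T) :
  supported_in A `<=` S -> ring_ideal S (supported_in A).
Proof.
move=> AS; split => //.
- by move=> x /=; rewrite eqxx.
- move=> a b Ia Ib x /=; have [ax|/Ia //] := eqVneq (a x) 0.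
  by have [bx|/Ib //] := eqVneq (b x) 0; rewrite ax bx subrr eqxx.
- move=> r a _ Ia x /=; have [ax|/Ia //] := eqVneq (a x) 0.
  by rewrite ax mulr0 eqxx.
Qed.

(* Since x / 0 = 0, the pointwise quotient g / h is a cofactor even where h
   vanishes. *)
Lemma ring_ideal_dvd (I : set (T -> R)) g h :
  ring_ideal S I -> I h -> S (fun x => g x / h x) ->
  (forall x, h x = 0 -> g x = 0) -> I g.
Proof.
case=> _ _ _ IM Ih Sq gh.
have -> : g = (fun x => g x / h x * h x).
  apply/funext => x; have [hx0|hx] := eqVneq (h x) 0; last by rewrite divfK.
  by rewrite hx0 mulr0 (gh x hx0).
exact: IM.
Qed.

End RingIdeals.

Lemma ring_ideal_witness (T : eqType) (R : realType) (S I : set (T -> R))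
    (A : set T) :
  ring_ideal S I -> finite_set A ->
  exists2 h, I h & forall x, A x -> ideal_support I x -> h x != 0.
Proof.
move=> idI /finite_seqP[s ->]; have [Isub I0 _ IM] := idI.
elim: s => [|y s [h Ih hs]]; first by exists (fun=> 0).
have [[f If fy]|ny] := pselect (ideal_support I y).
  exists (fun x => h x ^+ 2 + f x ^+ 2).
    by apply: ring_idealD idI _ _; apply: IM => //; apply: Isub.
  move=> x /=; rewrite in_cons paddr_eq0 ?sqr_ge0 // !sqrf_eq0 negb_and.
  by case/orP => [/eqP -> _|xs Ix]; rewrite ?fy ?orbT ?hs.
exists h => // x /=; rewrite in_cons => /orP[/eqP -> /ny[] | xs]; exact: hs.
Qed.

Lemma noetherian_finite (T : eqType) (R : realType) :
  finite_set [set: T] -> noetherian_sub [set: T -> R].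
Proof.
move=> finT J idJ Jinc.
pose Z n := ideal_support (J n).
have Zinc n : Z n `<=` Z n.+1.
  by move=> x [f Jf fx]; exists f => //; exact: Jinc.
have [N ZN] := finite_chain_bound Zinc (sub_finite_set (@subsetT _ _) finT).
have [h Jh hZ] := ring_ideal_witness (idJ N) finT.
exists N => n leNn; apply/seteqP; split; last exact: subset_chain_homo.
move=> g Jg; apply: (ring_ideal_dvd (idJ N) Jh) => // x hx0.
have [//|gx] := eqVneq (g x) 0.
by have := hZ x I (ZN n x (ex_intro2 _ _ g Jg gx)); rewrite hx0 eqxx.
Qed.

Lemma closed_ideal_finite (X : topologicalType) (P : set (set X)) (A : set X) :
  closed_ideal P -> (forall x, P [set x]) -> finite_set A -> P A.
Proof.
case=> _ P0 PU _ P1 fA; rewrite -(fsbig_setU_set1 fA) fsbig_finite //=.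
by elim/big_ind: _ => // x _; exact: P1.
Qed.

Lemma discont_sub_closure_support (X : topologicalType) (R : realType)
    (f : X -> R) :
  discont f `<=` closure [set x | f x != 0].
Proof.
move=> x; apply: contra_notP => nclx.
have f0 y : ~ closure [set x | f x != 0] y -> 0 = f y.
  move=> ncly; apply/esym/eqP; apply: contra_notT ncly => fy.
  exact: subset_closure.
have near0 : \forall y \near x, 0 = f y.
  apply: filterS f0 _; apply: open_nbhs_nbhs; split => //.
  exact/closed_openC/closed_closure.
rewrite /prop_for /continuous_at -(f0 x nclx).
exact: cvg_trans (near_eq_cvg near0) (cvg_cst 0).
Qed.

Lemma closure_sub_closed (X : topologicalType) (A B : set X) :
  closed B -> A `<=` B -> closure A `<=` B.
Proof. by move=> /closure_id Bcl AB; rewrite Bcl; exact: closureS. Qed.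

Lemma CP_supported_finite (X : topologicalType) (R : realType)
    (P : set (set X)) (A : set X) :
  accessible_space X -> closed_ideal P -> (forall x, P [set x]) ->
  finite_set A -> supported_in A `<=` @CP X R P.
Proof.
move=> T1 idP P1 fA f fA_supp; have [_ _ _ Psub] := idP.
have Acl : closed A by exact: accessible_finite_set_closed.1 T1 A fA.
apply: Psub (closed_ideal_finite idP P1 fA) (@closed_closure _ _) _.
apply: (closure_sub_closed Acl).
apply: subset_trans (closure_sub_closed Acl fA_supp).
exact: discont_sub_closure_support.
Qed.

Lemma not_noetherian_infinite (X : topologicalType) (R : realType)
    (P : set (set X)) :
  accessible_space X -> closed_ideal P -> (forall x, P [set x]) ->
  infinite_set [set: X] -> ~ noetherian_sub (@CP X R P).
Proof.
move=> T1 idP P1 /infinite_injective[e einj] noe.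
pose J n : set (X -> R) := supported_in (e @` `I_n).
have idJ n : ring_ideal (CP P) (J n).
  apply: ring_ideal_supported.
  exact: CP_supported_finite T1 idP P1 (finite_image _ (finite_II n)).
have Jinc n : J n `<=` J n.+1.
  move=> f Jf x /Jf [k kn <-]; exists k => //=; exact: ltnW.
have [N JN] := noe J idJ Jinc.
pose d x : R := if x == e N then 1 else 0.
have : J N.+1 d.
  move=> x /=; rewrite /d.
  by have [-> _ | _] := eqVneq x (e N); [exists N | rewrite eqxx].
rewrite JN // => /(_ (e N)) /=; rewrite /d eqxx oner_neq0.
by move=> /(_ isT)[k kN /einj ekN]; move: kN; rewrite /= ekN ltnn.
Qed.

Theorem theorem5p11 (R : realType) (X : topologicalType) (P : set (set X)) :
  accessible_space X ->
  closed_ideal P ->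
  (forall x : X, P [set x]) ->
  (noetherian_sub (@CP X R P) <-> finite_set [set: X]).
Proof.
move=> T1 idP P1; split.
  move=> noe; apply: contrapT => infX.
  exact: not_noetherian_infinite T1 idP P1 infX noe.
move=> finX.
have -> : @CP X R P = [set: X -> R].
  apply/seteqP; split => // f _.
  exact: CP_supported_finite T1 idP P1 finX f (fun _ _ => I).
exact: noetherian_finite.
Qed.
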